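(* Assume CH. Then there exists a MAD family $\mathcal{A}\subseteq[\omega]^\omega$ such that (i) $\mathcal{A}$ is a $\lambda$-set, i.e. every countable subset of $\mathcal{A}$ is a relative $G_\delta$ subset of $\mathcal{A}$, and (ii) $\mathcal{A}$ is concentrated on the finite subsets of $\omega$, i.e. every open set $U\subseteq P(\omega)\cong 2^\omega$ containing $[\omega]^{<\omega}$ contains all but countably many elements of $\mathcal{A}$.
   Context: $[\omega]^\omega$ and $[\omega]^{<\omega}$ denote the sets of infinite and finite subsets of $\omega$; $P(\omega)$ is identified with $2^\omega$ via characteristic functions, with the product topology. A MAD family is an infinite set $\mathcal{A}\subseteq[\omega]^\omega$ such that any two distinct elements have finite intersection and every infinite subset of $\omega$ has infinite intersection with some element of $\mathcal{A}$. CH is the continuum hypothesis $2^{\aleph_0}=\aleph_1$. *)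

(* P(omega) = 2^omega is represented by the Cantor
   space [cantor_space] = prod_topology (fun _ : nat => bool), i.e. nat -> bool
   with the product topology; x : cantor_space is identified with the subset
   [set n | x n] of omega (characteristic function). *)
From HB Require Import structures.
From mathcomp Require Import all_boot all_order all_algebra.
From mathcomp Require Import all_classical all_reals all_analysis.
Set Implicit Arguments. Unset Strict Implicit. Unset Printing Implicit Defensive.
Local Open Scope classical_set_scope.

Definition setof (x : cantor_space) : set nat := [set n | x n].

Definition infinite_sub (x : cantor_space) : Prop := infinite_set (setof x).

Definition fin_subsets : set cantor_space :=
  [set x | finite_set (setof x)].

Definition MAD (A : set cantor_space) : Prop :=
  [/\ infinite_set A,
      (forall a, A a -> infinite_sub a),
      (forall a b, A a -> A b -> a <> b -> finite_set (setof a `&` setof b)) &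
      (forall y, infinite_sub y -> exists2 a, A a & infinite_set (setof y `&` setof a))].

Definition lambda_set (A : set cantor_space) : Prop :=
  forall B : set cantor_space, B `<=` A -> countable B ->
    exists G : nat -> set cantor_space,
      (forall n, open (G n)) /\ B = A `&` \bigcap_n G n.

Definition concentrated_on_fin (A : set cantor_space) : Prop :=
  forall U : set cantor_space, open U -> fin_subsets `<=` U -> countable (A `\` U).

Definition CH : Prop :=
  forall S : set cantor_space, countable S \/ (S #= [set: cantor_space])%card.

(* Under CH, the continuum carries a well-order in which every point has
   countably many predecessors.  Run a recursion of length omega_1 along it in
   which every point [a] plays three roles: a subset of omega, a code for an
   open subset of 2^omega, and a stage.  At stage [a], if [a] is infinite and
   almost disjoint from the countably many members chosen so far, a diagonal
   construction over omega yields a coinfinite subset of [a] that becomes a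
   member: it is almost disjoint from the earlier members, lies in every open
   set containing the finite sets coded at or before [a], and, for every stage
   [c] up to [a], misses a whole block of a system of disjoint blocks each of
   which meets every member chosen before [c].
   Maximality holds because every candidate is visited.  An open set
   containing the finite sets contains one with a code [w], and all members
   chosen after [w] lie in it.  For a countable set [B] of members, pick a
   stage [g] above all of them: the members meeting every block of [g] are
   exactly those chosen before [g], a countable set, so [B] is the trace of a
   G_delta set. *)

From mathcomp Require Import all_boot all_order all_algebra.
From mathcomp Require Import all_classical all_reals all_analysis.
From mathcomp Require Import wochoice borel_hierarchy.
From Stdlib Require Import Wellfounded.
Set Implicit Arguments. Unset Strict Implicit. Unset Printing Implicit Defensive.
Local Open Scope classical_set_scope.

Lemma bounded_finite_set (S : set nat) N : (forall t, S t -> t < N)%N -> finite_set S.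
Proof. by move=> SN; apply: (sub_finite_set _ (finite_II N)) => t /SN. Qed.

Lemma finite_set_bounded (S : set nat) :
  finite_set S -> exists N, forall t, S t -> (t < N)%N.
Proof.
move=> /finite_fsetP[X ->]; exists (\max_(t <- finmap.enum_fset X) t).+1 => t /= tX.
by rewrite ltnS; apply: (@leq_bigmax_seq _ _ xpredT id).
Qed.

Lemma infinite_set_ge (S : set nat) b : infinite_set S -> exists t, S t /\ (b <= t)%N.
Proof.
move=> Sinf; apply: contrapT => noS; apply: Sinf; apply: (@bounded_finite_set _ b) => t St.
by rewrite ltnNge; apply/negP => bt; apply: noS; exists t.
Qed.

Lemma unbounded_infinite_set (S : set nat) :
  (forall b, exists t, S t /\ (b <= t)%N) -> infinite_set S.
Proof.
move=> Sub /finite_set_bounded[N SN]; have [t [St Nt]] := Sub N.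
by have := SN t St; rewrite ltnNge Nt.
Qed.

Lemma infinite_setS T (A B : set T) : A `<=` B -> infinite_set A -> infinite_set B.
Proof. by move=> AB Ainf Bfin; apply/Ainf/(sub_finite_set AB). Qed.

Lemma countableS T (A B : set T) : A `<=` B -> countable B -> countable A.
Proof. by move=> AB; apply/sub_countable/subset_card_le. Qed.

Lemma countable_image T U (f : T -> U) (A : set T) : countable A -> countable (f @` A).
Proof. exact/sub_countable/card_image_le. Qed.

Lemma countableU T (A B : set T) : countable A -> countable B -> countable (A `|` B).
Proof.
move=> cA cB; have -> : A `|` B = \bigcup_(i in [set: bool]) (if i then A else B).
  apply/seteqP; split=> x; first by case=> h; [exists true|exists false].
  by case=> -[] _ h; [left|right].
by apply: bigcup_countable => // -[].
Qed.

Lemma cantor_space_uncountable : ~ countable [set: cantor_space].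
Proof.
move=> /pcard_surjP[g g_surj]; pose d : cantor_space := fun n => ~~ g n n.
have [n _ gn] := g_surj d I.
by have := congr1 (fun f : cantor_space => f n) gn; rewrite /d; case: (g n n).
Qed.

Lemma countable_enum (T : pointedType) (C : set T) : countable C ->
  exists e : nat -> T, forall c, C c -> exists k, e k = c.
Proof. by move=> /pcard_surjP[e e_surj]; exists e => c /e_surj[k _ <-]; exists k. Qed.

Section GenericSubset.
Variables (Y : set nat) (D : nat -> set nat) (P : nat -> set nat -> Prop)
  (q : nat -> nat -> nat -> nat).
Hypotheses (Y_infinite : infinite_set Y) (YD_finite : forall j, finite_set (Y `&` D j))
  (P_open : forall j F, finite_set F -> exists L, forall z : set nat,
     (forall t, (t < L)%N -> (z t <-> F t)) -> P j z)
  (q_block : forall j n k n' k', q j n k = q j n' k' -> n = n')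
  (q_ge : forall j n k, (n <= q j n k)%N).

Definition block j n : set nat := [set t | exists k, q j n k = t].

(* [init] is the part of the subset being built below [bound]; its remaining
   elements will be taken from [pool]. *)
Record approx := Approx { init : set nat; bound : nat; pool : set nat }.

Record approx_inv i (s : approx) : Prop := {
  init_sub : forall t, init s t -> Y t /\ (t < bound s)%N;
  pool_sub : forall t, pool s t -> Y t /\ (bound s <= t)%N;
  pool_infinite : infinite_set (pool s);
  bound_ge : (i <= bound s)%N;
  approx_P : forall j, (j < i)%N -> forall z : set nat,
    (forall t, (t < bound s)%N -> (z t <-> init s t)) -> P j z;
  approx_block : forall j, (j < i)%N ->
    exists n, forall t, block j n t -> ~ init s t /\ ~ pool s t;
  approx_D : forall j, (j < i)%N -> forall t, pool s t -> ~ D j t }.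

Record extends (s s' : approx) : Prop := {
  extends_init : init s `<=` init s';
  extends_new : forall t, init s' t -> ~ init s t -> pool s t;
  extends_grow : exists t, init s' t /\ (bound s <= t)%N;
  extends_bound : (bound s <= bound s')%N;
  extends_agree : forall t, (t < bound s)%N -> (init s' t <-> init s t);
  extends_pool : pool s' `<=` pool s;
  extends_gap : exists w, [/\ Y w, (bound s <= w)%N, (w < bound s')%N & ~ init s' w] }.

(* Two distinct blocks are disjoint, so one of them leaves an infinite remainder. *)
Lemma infinite_setD_block (R : set nat) j b :
  infinite_set R -> exists2 n, (b <= n)%N & infinite_set (R `\` block j n).
Proof.
move=> Rinf; have [Rb|Rb] := pselect (infinite_set (R `\` block j b)).
  by exists b.
exists b.+1 => //; move=> Rb1; apply: Rinf.
have : finite_set ((R `\` block j b) `|` (R `\` block j b.+1)).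
  by rewrite finite_setU; split=> //; apply: contrapT.
apply: sub_finite_set => t Rt; have [[k qk]|nb] := pselect (block j b t); last by left.
right; split=> // -[k' qk']; have := q_block (etrans qk (esym qk')).
by move=> /eqP; rewrite eqn_leq ltnn andbF.
Qed.

Definition refined_pool s i n := pool s `\` block i n `\` D i.

Lemma approx_refine i s : approx_inv i s ->
  exists2 n, (bound s <= n)%N & infinite_set (refined_pool s i n).
Proof.
move=> s_inv; have [n bn Rn] := infinite_setD_block i (bound s) (pool_infinite s_inv).
exists n => //; apply: (@infinite_setS _ ((pool s `\` block i n) `\` (Y `&` D i))).
  move=> t [[Rt Bt] YDt]; split=> // Dt; apply: YDt; split=> //.
  by have [] := pool_sub s_inv Rt.
exact: infinite_setD.
Qed.

Section Extension.
Variables (i : nat) (s : approx) (n L m w : nat).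
Hypotheses (s_inv : approx_inv i s) (n_ge : (bound s <= n)%N)
  (L_P : forall z : set nat, (forall t, (t < L)%N -> (z t <-> init s t)) -> P i z)
  (R_inf : infinite_set (refined_pool s i n))
  (R_m : refined_pool s i n m) (R_w : refined_pool s i n w)
  (m_ge : (maxn (bound s) L <= m)%N) (m_lt_w : (m < w)%N).

Definition extension :=
  Approx (init s `|` [set m]) w.+1 (refined_pool s i n `&` [set t | (w < t)%N]).

Let refined_sub t : refined_pool s i n t -> pool s t. Proof. by case=> -[]. Qed.
Let bound_m : (bound s <= m)%N. Proof. exact: leq_trans (leq_maxl _ _) m_ge. Qed.
Let bound_w : (bound s <= w)%N. Proof. exact: leq_trans bound_m (ltnW m_lt_w). Qed.
Let init_m : ~ init s m.
Proof. by move=> /(init_sub s_inv)[_]; rewrite ltnNge bound_m. Qed.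

Lemma extension_agree z : (forall t, (t < w.+1)%N -> (z t <-> init extension t)) ->
  forall t, (t < bound s)%N -> (z t <-> init s t).
Proof.
move=> zE t tb; rewrite zE /=; last exact: leq_trans tb (leq_trans bound_w _).
split=> [[//|tm]|]; last by left.
by move: tb; rewrite tm ltnNge bound_m.
Qed.

Lemma extends_extension : extends s extension.
Proof.
split=> /=.
- by move=> t; left.
- by move=> t [//|->] _; apply: refined_sub.
- by exists m; split; [right|].
- exact: leq_trans bound_w _.
- move=> t tb; split=> [[//|tm]|]; last by left.
  by move: tb; rewrite tm ltnNge bound_m.
- by move=> t [/refined_sub].
- exists w; have [Yw _] := pool_sub s_inv (refined_sub R_w); split=> //.
  by case=> [/(init_sub s_inv)[_]|wm]; [rewrite ltnNge bound_w|move: m_lt_w; rewrite wm ltnn].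
Qed.

Lemma approx_inv_extension : approx_inv i.+1 extension.
Proof.
have [Ym _] := pool_sub s_inv (refined_sub R_m).
split=> /=.
- move=> t [/(init_sub s_inv)[Yt tb]|->]; last by split=> //; apply: ltn_trans m_lt_w _.
  by split=> //; apply: leq_trans tb (leq_trans bound_w _).
- by move=> t [/refined_sub/(pool_sub s_inv)[Yt _] wt].
- apply: (@infinite_setS _ (refined_pool s i n `\` [set t | (t < w.+1)%N])).
    by move=> t [Rt wt]; split=> //=; rewrite ltnNge; apply/negP => tw; apply: wt.
  exact/infinite_setD/(@bounded_finite_set _ w.+1).
- by rewrite ltnS (leq_trans (bound_ge s_inv) bound_w).
- move=> j; rewrite ltnS leq_eqVlt => /orP[/eqP->|ji] z zE; last first.
    by apply: (approx_P s_inv ji); apply: extension_agree.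
  apply: L_P => t tL.
  have tm : (t < m)%N by apply: leq_trans tL (leq_trans (leq_maxr _ _) m_ge).
  rewrite zE /=; last exact: ltn_trans tm (ltn_trans m_lt_w _).
  split=> [[//|tm']|]; last by left.
  by move: tm; rewrite tm' ltnn.
- move=> j; rewrite ltnS leq_eqVlt => /orP[/eqP->|ji].
    exists n => t [k qt]; split; last by case=> -[[_ []]]; exists k.
    case=> [/(init_sub s_inv)[_]|tm]; last by case: R_m => -[_ []]; rewrite -tm; exists k.
    by rewrite -qt ltnNge (leq_trans n_ge (q_ge _ _ _)).
  have [n' hn'] := approx_block s_inv ji; exists n' => t /hn'[nF nR]; split.
    by case=> [//|tm]; apply: nR; rewrite tm; apply: refined_sub.
  by case=> /refined_sub.
- move=> j; rewrite ltnS leq_eqVlt => /orP[/eqP->|ji] t; first by case=> -[].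
  by case=> /refined_sub/(approx_D s_inv ji).
Qed.

End Extension.

Lemma approx_step i s : approx_inv i s -> exists s', extends s s' /\ approx_inv i.+1 s'.
Proof.
move=> s_inv; have [n n_ge Rinf] := approx_refine s_inv.
have /(P_open i)[L L_P] : finite_set (init s).
  by apply: (@bounded_finite_set _ (bound s)) => t /(init_sub s_inv)[].
have [m [R_m m_ge]] := infinite_set_ge (maxn (bound s) L) Rinf.
have [w [R_w m_lt_w]] := infinite_set_ge m.+1 Rinf.
exists (extension i s n m w); split.
  exact: extends_extension s_inv R_m R_w m_ge m_lt_w.
exact: approx_inv_extension s_inv n_ge L_P Rinf R_m m_ge m_lt_w.
Qed.

Definition next_approx i s :=
  if pselect (exists s', extends s s' /\ approx_inv i.+1 s') is left h
  then projT1 (cid h) else s.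

Fixpoint approx_seq i :=
  if i is i'.+1 then next_approx i' (approx_seq i') else Approx set0 0 Y.

Lemma approx_seq_inv i : approx_inv i (approx_seq i).
Proof.
elim: i => [|i IH]; first by split=> //= t; split.
rewrite /= /next_approx; case: pselect => [h|[]]; last exact: approx_step.
by have [] := projT2 (cid h).
Qed.

Lemma approx_seq_extends i : extends (approx_seq i) (approx_seq i.+1).
Proof.
rewrite /= /next_approx; case: pselect => [h|[]]; last exact/approx_step/approx_seq_inv.
by have [] := projT2 (cid h).
Qed.

Lemma approx_seq_mono i i' : (i <= i')%N ->
  [/\ init (approx_seq i) `<=` init (approx_seq i'),
      (forall t, (t < bound (approx_seq i))%N ->
         (init (approx_seq i') t <-> init (approx_seq i) t)),
      (forall t, init (approx_seq i') t -> ~ init (approx_seq i) t ->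
         pool (approx_seq i) t),
      pool (approx_seq i') `<=` pool (approx_seq i) &
      (bound (approx_seq i) <= bound (approx_seq i'))%N].
Proof.
move=> /subnKC <-; elim: (i' - i) => [|d [init_le agree new pool_le bound_le]].
  by rewrite addn0; split=> // t ? ?.
rewrite addnS; have [ext_init ext_new _ ext_bound ext_agree ext_pool _] :=
  approx_seq_extends (i + d).
split.
- by move=> t /init_le/ext_init.
- by move=> t tb; rewrite -agree // ext_agree // (leq_trans tb bound_le).
- move=> t t_init t_init0; have [|] := pselect (init (approx_seq (i + d)) t).
    by move=> /new; apply.
  by move=> /(ext_new _ t_init)/pool_le.
- by move=> t /ext_pool/pool_le.
- exact: leq_trans bound_le ext_bound.
Qed.

Definition approx_lim : set nat := [set t | exists i, init (approx_seq i) t].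

Lemma approx_lim_agree i t :
  (t < bound (approx_seq i))%N -> (approx_lim t <-> init (approx_seq i) t).
Proof.
move=> tb; split; last by exists i.
case=> i' t_init; have [ii'|i'i] := leqP i i'.
  by have [_ agree _ _ _] := approx_seq_mono ii'; rewrite -agree.
by have [init_le _ _ _ _] := approx_seq_mono (ltnW i'i); apply: init_le.
Qed.

Lemma approx_lim_pool i t :
  approx_lim t -> ~ init (approx_seq i) t -> pool (approx_seq i) t.
Proof.
case=> i' t_init; have [_ _ new _ _] := approx_seq_mono (leq_maxl i i').
apply: new; have [init_le _ _ _ _] := approx_seq_mono (leq_maxr i i').
exact: init_le.
Qed.

Theorem generic_subset : exists a : set nat,
  [/\ a `<=` Y, infinite_set a & infinite_set (Y `\` a)] /\
  [/\ (forall j, finite_set (a `&` D j)), (forall j, P j a) &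
      (forall j, exists n, forall k, ~ a (q j n k))].
Proof.
have inv := approx_seq_inv; have ext := approx_seq_extends.
exists approx_lim; split; split.
- by move=> t [i /(init_sub (inv i))[]].
- apply: unbounded_infinite_set => b; have [t [t_init bt]] := extends_grow (ext b).
  exists t; split; first by exists b.+1.
  exact: leq_trans (bound_ge (inv b)) bt.
- apply: unbounded_infinite_set => b; have [w [Yw bw wb w_init]] := extends_gap (ext b).
  exists w; split; last exact: leq_trans (bound_ge (inv b)) bw.
  by split=> // /(approx_lim_agree wb).
- move=> j; apply: (@bounded_finite_set _ (bound (approx_seq j.+1))) => t [a_t Dt].
  rewrite ltnNge; apply/negP => bt; have t_init : ~ init (approx_seq j.+1) t.
    by move=> /(init_sub (inv j.+1))[_]; rewrite ltnNge bt.
  by move: (approx_lim_pool a_t t_init) => /(approx_D (inv j.+1) (ltnSn j)).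
- move=> j; apply: (approx_P (inv j.+1) (ltnSn j)) => t; exact: approx_lim_agree.
- move=> j; have [n hn] := approx_block (inv j.+1) (ltnSn j); exists n => k a_t.
  have [t_init t_pool] := hn (q j n k) (ex_intro _ k erefl).
  exact/t_pool/approx_lim_pool.
Qed.

End GenericSubset.

Definition omega1_like T (lt : T -> T -> Prop) :=
  [/\ well_founded lt, (forall x y z, lt x y -> lt y z -> lt x z),
      (forall x y, lt x y \/ x = y \/ lt y x) & (forall x, countable [set y | lt y x])].

Section WellOrder.
Variables (T : eqType) (R : rel T).
Hypothesis R_wo : well_order R.

Let R_chain : wo_chain R predT. Proof. by move=> A _; apply: R_wo. Qed.

Lemma wo_total x y : R x y || R y x.
Proof. exact: (wo_chainW R_chain). Qed.

Lemma wo_antisym x y : R x y -> R y x -> x = y.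
Proof. by move=> xy yx; apply: (wo_chain_antisymmetric R_chain) => //; rewrite xy yx. Qed.

Lemma wo_min (S : set T) : S !=set0 -> exists2 z, S z & forall x, S x -> R z x.
Proof.
case=> x Sx; have [|z [[zS zmin] _]] := @R_wo (fun x => `[< S x >]).
  by exists x; rewrite inE.
exists z; first by move: zS; rewrite inE.
by move=> y Sy; apply: zmin; rewrite inE.
Qed.

Definition wo_lt x y := R x y /\ x <> y.

Lemma wo_lt_wf : well_founded wo_lt.
Proof.
move=> x; apply: contrapT => x_nacc.
have [z z_nacc zmin] := @wo_min (fun x => ~ Acc wo_lt x) (ex_intro _ x x_nacc).
apply: z_nacc; constructor => y [yz y_neq_z]; apply: contrapT => y_nacc.
exact/y_neq_z/wo_antisym/zmin.
Qed.

Lemma wo_lt_trichotomy x y : wo_lt x y \/ x = y \/ wo_lt y x.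
Proof.
have [->|xy] := pselect (x = y); first by right; left.
have /orP[Rxy|Ryx] := wo_total x y; first by left.
by right; right; split=> // yx; apply: xy.
Qed.

Lemma wo_lt_trans x y z : wo_lt x y -> wo_lt y z -> wo_lt x z.
Proof.
move=> [Rxy xy] [Ryz yz].
pose S := [set w | w = x \/ w = y \/ w = z].
have [m Sm mmin] := @wo_min S (ex_intro S x (or_introl erefl)).
have mx := mmin x (or_introl erefl).
have my := mmin y (or_intror (or_introl erefl)).
have mz := mmin z (or_intror (or_intror erefl)).
case: Sm => [|[|]] m_eq; subst m.
- by split=> // xz; subst z; apply: yz; apply: wo_antisym.
- by case: xy; apply: wo_antisym.
- by case: yz; apply: wo_antisym.
Qed.

End WellOrder.

Lemma omega1_like_preimage U T (lt : T -> T -> Prop) (h : U -> T) :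
  injective h -> well_founded lt -> (forall x y z, lt x y -> lt y z -> lt x z) ->
  (forall x y, lt x y \/ x = y \/ lt y x) -> (forall v, countable [set y | lt y (h v)]) ->
  omega1_like (fun u v => lt (h u) (h v)).
Proof.
move=> h_inj lt_wf lt_trans lt_tri lt_cnt; split.
- exact: Inverse_Image.wf_inverse_image.
- by move=> x y z; apply: lt_trans.
- by move=> x y; have [|[/h_inj|]] := lt_tri (h x) (h y); auto.
- move=> v; have /countable_injP[g g_inj] := lt_cnt v.
  by apply/countable_injP; exists (g \o h) => x y x_lt y_lt /= gxy; apply/h_inj/g_inj.
Qed.

(* The order is the well-ordering of the continuum restricted to its shortest
   uncountable initial segment, which CH makes equinumerous to the continuum. *)
Lemma CH_omega1_like :
  CH -> exists lt : cantor_space -> cantor_space -> Prop, omega1_like lt.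
Proof.
move=> ch; have [R R_wo] := well_ordering_principle cantor_space.
pose seg x := [set y | wo_lt R y x].
have [[x0 x0_unc]|seg_cnt] := pselect (exists x, ~ countable (seg x)); last first.
  exists (fun u v => wo_lt R (id u) (id v)); apply: omega1_like_preimage.
  - by [].
  - exact: (wo_lt_wf R_wo).
  - exact: (wo_lt_trans R_wo).
  - exact: (wo_lt_trichotomy R_wo).
  - by move=> v; apply: contrapT => v_unc; apply: seg_cnt; exists v.
have [m m_unc m_min] :=
  @wo_min _ _ R_wo (fun x => ~ countable (seg x)) (ex_intro _ x0 x0_unc).
have [//|seg_m] := ch (seg m).
move: seg_m; rewrite card_eq_sym card_eq_le => /andP[/pcard_leP[f] _].
have f_seg x : seg m (f x) by apply: (@funS _ _ _ _ f x).
exists (fun u v => wo_lt R (f u) (f v)); apply: omega1_like_preimage.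
- by move=> x y; apply: (@inj _ _ _ f); rewrite inE.
- exact: (wo_lt_wf R_wo).
- exact: (wo_lt_trans R_wo).
- exact: (wo_lt_trichotomy R_wo).
- move=> v; apply: contrapT => fv_unc; have [Rfv fv_m] := f_seg v.
  exact/fv_m/(wo_antisym R_wo Rfv)/m_min.
Qed.

Section IncreasingChoice.
Variables (S : nat -> set nat) (S_infinite : forall t, infinite_set (S t)).

Definition pick_ge (t b : nat) : nat := projT1 (cid (infinite_set_ge b (@S_infinite t))).

Lemma pick_geP t b : S t (pick_ge t b) /\ (b <= pick_ge t b)%N.
Proof. exact: projT2 (cid (infinite_set_ge b (@S_infinite t))). Qed.

Fixpoint inc_choice t := pick_ge t (if t is t'.+1 then (inc_choice t').+1 else 0).

Lemma inc_choice_in t : S t (inc_choice t).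
Proof. by case: t => [|t] /=; apply: (pick_geP _ _).1. Qed.

Lemma inc_choice_inj : injective inc_choice.
Proof.
apply/incn_inj/leq_mono/(homo_ltn ltn_trans) => t.
exact: (pick_geP t.+1 _).2.
Qed.

End IncreasingChoice.

(* Block [n] is [[set q n k | k]]. *)
Lemma block_system (e : nat -> set nat) : (forall k, infinite_set (e k)) ->
  exists q : nat -> nat -> nat,
  [/\ (forall n k, e k (q n k)), (forall n k, (n <= q n k)%N) &
      (forall n k n' k', q n k = q n' k' -> n = n')].
Proof.
move=> e_inf; pose nk t : nat * nat := odflt (0, 0)%N (unpickle t).
pose S t := e (nk t).2 `\` [set x | (x < (nk t).1)%N].
have S_inf t : infinite_set (S t).
  exact/infinite_setD/(@bounded_finite_set _ (nk t).1).
pose q (n k : nat) := inc_choice S_inf (pickle (n, k)).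
have qS n k : S (pickle (n, k)) (q n k) by apply: inc_choice_in.
exists q; split.
- by move=> n k; have [] := qS n k; rewrite /nk pickleK.
- by move=> n k; have [_] := qS n k; rewrite /nk pickleK /= => /negP; rewrite -leqNgt.
- by move=> n k n' k' /inc_choice_inj/(pcan_inj pickleK)[].
Qed.

Lemma countable_block_system (C : set cantor_space) : exists q : nat -> nat -> nat,
  [/\ (forall n k, (n <= q n k)%N), (forall n k n' k', q n k = q n' k' -> n = n') &
      (countable C -> forall c, C c -> infinite_sub c -> forall n, exists k, c (q n k))].
Proof.
have [/countable_enum[g g_surj]|C_unc] := pselect (countable C); last first.
  have [q [_ q_ge q_blk]] := @block_system (fun=> setT) (fun=> infinite_nat).
  by exists q; split.
pose e k := if `[< infinite_sub (g k) >] then setof (g k) else setT.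
have e_inf k : infinite_set (e k).
  by rewrite /e; case: asboolP => // _; exact: infinite_nat.
have [q [q_e q_ge q_blk]] := block_system e_inf; exists q; split=> // _ c Cc c_inf n.
have [k gk] := g_surj c Cc; exists k; have := q_e n k.
by rewrite /e gk (asboolT c_inf).
Qed.

Definition blocks C := projT1 (cid (countable_block_system C)).

Lemma blocksP C : [/\ (forall n k, (n <= blocks C n k)%N),
    (forall n k n' k', blocks C n k = blocks C n' k' -> n = n') &
    (countable C -> forall c, C c -> infinite_sub c -> forall n, exists k, c (blocks C n k))].
Proof. exact: projT2 (cid (countable_block_system C)). Qed.

Definition cylinder (x : cantor_space) (L : nat) : set cantor_space :=
  [set z | forall i, (i < L)%N -> z i = x i].

Lemma nbhs_cylinder (x : cantor_space) (U : set cantor_space) :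
  nbhs x U -> exists L, cylinder x L `<=` U.
Proof.
pose F := filter_from [set: nat] (cylinder x).
have F_filter : Filter F.
  apply: filter_from_filter; first by exists 0%N.
  move=> i j _ _; exists (maxn i j) => // z zij; split=> k kij; apply: zij.
    exact: leq_trans kij (leq_maxl _ _).
  exact: leq_trans kij (leq_maxr _ _).
have : F --> x.
  apply/cvg_sup => i; apply/cvg_image => //.
    by apply/seteqP; split=> // b _; exists (fun=> b).
  move=> A; rewrite nbhs_principalE => /principal_filterP Axi.
  have [Anx|Anx] := pselect (A (~~ x i)).
    exists (cylinder x i); first by exists i.
    apply/seteqP; split=> [b [f _ <-]|b _]; first by case: (f i) (x i) Axi Anx => -[].
    exists (fun k => if k == i then b else x k) => /=; last by rewrite eqxx.
    by move=> k ki; rewrite (ltn_eqF ki).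
  exists (cylinder x i.+1); first by exists i.+1.
  apply/seteqP; split=> [b [f fx <-]|b Ab]; first by rewrite fx.
  by exists x => //; case: b (x i) Ab Anx Axi => -[].
by move=> /(_ U) xU /xU[L _ LU]; exists L.
Qed.

Lemma open_coord (j : nat) : open [set x : cantor_space | x j].
Proof.
have -> : [set x : cantor_space | x j] = (fun x : cantor_space => x j) @^-1` [set true] by [].
apply: open_comp; last exact: discrete_open.
by move=> x _; apply: (@proj_continuous nat (fun _ => bool) j x).
Qed.

Definition cantor_of (z : set nat) : cantor_space := fun t => `[< z t >].

Lemma setof_cantor_of z : setof (cantor_of z) = z.
Proof. by apply/seteqP; split=> t /asboolP. Qed.

Definition bitseq_of (m : nat) : bitseq := odflt [::] (unpickle m).

Definition basic_open (m : nat) : set cantor_space :=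
  [set z | forall i, (i < size (bitseq_of m))%N -> z i = nth false (bitseq_of m) i].

Definition coded_open (w : cantor_space) : set cantor_space :=
  [set x | exists2 m, w m & basic_open m x].

Lemma coded_open_finite w F : fin_subsets `<=` coded_open w -> finite_set F ->
  exists L, forall z : set nat,
    (forall t, (t < L)%N -> (z t <-> F t)) -> coded_open w (cantor_of z).
Proof.
move=> w_fin F_fin; have /w_fin[m wm mF] : fin_subsets (cantor_of F).
  by rewrite /fin_subsets /= setof_cantor_of.
exists (size (bitseq_of m)) => z zF; exists m => // i i_lt.
rewrite -(mF i i_lt) /cantor_of; congr `[< _ >]; exact/propext/zF.
Qed.

Lemma coded_open_sub U : open U -> fin_subsets `<=` U ->
  exists w, coded_open w `<=` U /\ fin_subsets `<=` coded_open w.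
Proof.
move=> U_open U_fin; exists (fun m => `[< basic_open m `<=` U >]); split.
  by move=> x [m /asboolP mU /mU].
move=> x /U_fin Ux; have /nbhs_cylinder[L LU] : nbhs x U by apply: open_nbhs_nbhs.
exists (pickle (mkseq x L)); last first.
  by move=> i; rewrite /= /bitseq_of pickleK size_mkseq => iL; rewrite nth_mkseq.
apply/asboolP => z zx; apply: LU => i iL.
by rewrite zx /bitseq_of pickleK ?size_mkseq // nth_mkseq.
Qed.

Section Gdelta.
Variable T : ptopologicalType.

Lemma GdeltaI (S1 S2 : set T) : Gdelta S1 -> Gdelta S2 -> Gdelta (S1 `&` S2).
Proof.
move=> [F1 F1_open ->] [F2 F2_open ->].
exists (fun n => if odd n then F2 n./2 else F1 n./2); first by move=> n; case: odd.
apply/seteqP; split=> [x [x1 x2] n _|x xF]; first by case: odd; [apply: x2|apply: x1].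
split=> n _.
  by have := xF n.*2 I; rewrite odd_double doubleK.
by have := xF n.*2.+1 I; rewrite /= odd_double uphalf_double.
Qed.

Lemma Gdelta_setC_countable (E : set T) :
  accessible_space T -> countable E -> Gdelta (~` E).
Proof.
move=> T1 /countable_enum[e e_surj].
exists (fun k => if `[< E (e k) >] then ~` [set e k] else setT).
  move=> k; case: asboolP => _; last exact: openT.
  by rewrite openC; apply: accessible_closed_set1.
apply/seteqP; split=> [x Ex k _|x xF Ex].
  by case: asboolP => // Eek xek; apply/Ex; rewrite xek.
have [k ek] := e_surj x Ex; have := xF k I; rewrite ek (asboolT Ex); exact.
Qed.

End Gdelta.

Section Construction.
Local Notation T := cantor_space.
Variable lt : T -> T -> Prop.
Hypotheses (lt_wf : well_founded lt) (lt_trans : forall x y z, lt x y -> lt y z -> lt x z)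
  (lt_tri : forall x y, lt x y \/ x = y \/ lt y x)
  (lt_cnt : forall x, countable [set y | lt y x]).

Definition lte b a := lt b a \/ b = a.

Definition values_below (g : T -> option T) c : set T :=
  [set x | exists b, lt b c /\ g b = Some x].

(* The first two fields concern [a] only: [sel a] is defined exactly when [a]
   is infinite and almost disjoint from all earlier members. *)
Record good_choice a (g : T -> option T) (x : T) : Prop := {
  gc_eligible : infinite_sub a;
  gc_eligible_ad : forall c, values_below g a c -> finite_set (setof a `&` setof c);
  gc_sub : setof x `<=` setof a;
  gc_infinite : infinite_sub x;
  gc_rest : infinite_set (setof a `\` setof x);
  gc_ad : forall c, values_below g a c -> finite_set (setof x `&` setof c);
  gc_open : forall b, lte b a -> fin_subsets `<=` coded_open b -> coded_open b x;
  gc_block : forall c, lte c a -> exists n, forall k, ~ x (blocks (values_below g c) n k) }.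

Definition choose a g : option T :=
  if pselect (exists x, good_choice a g x) is left h then Some (projT1 (cid h)) else None.

Definition restrict a (f : forall b, lt b a -> option T) b : option T :=
  if pselect (lt b a) is left h then f b h else None.

Definition sel : T -> option T :=
  Fix lt_wf (fun _ => option T) (fun a f => choose a (restrict f)).

Definition sel_below a b : option T := if pselect (lt b a) then sel b else None.

Lemma sel_eq a : sel a = choose a (sel_below a).
Proof.
rewrite /sel Fix_eq.
  by congr choose; apply: funext => b; rewrite /restrict /sel_below; case: pselect.
by move=> x f g fg; congr choose; apply: funext => b; rewrite /restrict; case: pselect.
Qed.

Definition chosen c := values_below sel c.

Lemma values_below_sel a c : lte c a -> values_below (sel_below a) c = chosen c.
Proof.
move=> ca; apply/seteqP; split=> x [b [bc bx]]; exists b; split=> //.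
  by move: bx; rewrite /sel_below; case: pselect.
rewrite /sel_below; case: pselect => // -[]; case: ca => [|<-] //.
exact: lt_trans.
Qed.

Lemma lte_countable a : countable [set b | lte b a].
Proof.
apply: (@countableS _ _ ([set b | lt b a] `|` [set a])); last exact: countableU.
by move=> b [ba|->]; [left|right].
Qed.

Lemma values_below_countable g c : countable (values_below g c).
Proof.
apply: (@countableS _ _ ((fun b => odflt point (g b)) @` [set b | lt b c])).
  by move=> x [b [bc bx]]; exists b => //; rewrite bx.
exact/countable_image.
Qed.

Lemma good_choice_exists a g : infinite_sub a ->
  (forall c, values_below g a c -> finite_set (setof a `&` setof c)) ->
  exists x, good_choice a g x.
Proof.
move=> a_inf a_ad.
have [s s_surj] := countable_enum (lte_countable a).
have [e e_surj] := countable_enum (values_below_countable g a).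
pose D j := if `[< values_below g a (e j) >] then setof (e j) else set0.
pose P j (z : set nat) :=
  fin_subsets `<=` coded_open (s j) -> coded_open (s j) (cantor_of z).
pose q j := blocks (values_below g (s j)).
have aD j : finite_set (setof a `&` D j).
  by rewrite /D; case: asboolP => [/a_ad //|_]; rewrite setI0.
have P_open j F : finite_set F -> exists L, forall z : set nat,
    (forall t, (t < L)%N -> (z t <-> F t)) -> P j z.
  move=> F_fin; have [s_fin|s_nfin] := pselect (fin_subsets `<=` coded_open (s j)).
    by have [L sL] := coded_open_finite s_fin F_fin; exists L => z /sL zs _.
  by exists 0%N => z _ /s_nfin.
have q_ge j n k : (n <= q j n k)%N by have [+ _ _] := blocksP (values_below g (s j)); apply.
have q_blk j n k n' k' : q j n k = q j n' k' -> n = n'.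
  by have [_ + _] := blocksP (values_below g (s j)); apply.
have [x [[xa x_inf ax_inf] [x_ad x_open x_block]]] :=
  generic_subset a_inf aD P_open q_blk q_ge.
exists (cantor_of x); split=> //; rewrite ?/infinite_sub ?setof_cantor_of //.
- by move=> c gc; have [j ejc] := e_surj c gc; have := x_ad j; rewrite /D ejc (asboolT gc).
- by move=> b /s_surj[j <-]; apply: x_open.
- move=> c /s_surj[j <-]; have [n xn] := x_block j; exists n => k /asboolP.
  exact: xn.
Qed.

Lemma sel_good a x : sel a = Some x -> good_choice a (sel_below a) x.
Proof. by rewrite sel_eq /choose; case: pselect => // h [<-]; apply: projT2 (cid h). Qed.

Lemma sel_some a : infinite_sub a ->
  (forall c, chosen a c -> finite_set (setof a `&` setof c)) -> exists x, sel a = Some x.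
Proof.
move=> a_inf a_ad; rewrite sel_eq /choose; case: pselect => [h|[]]; first by eexists.
by apply: good_choice_exists => //; rewrite values_below_sel //; right.
Qed.

Definition mad : set T := [set x | exists a, sel a = Some x].

Definition stage (x : T) : T := xget point [set a | sel a = Some x].

Lemma stageP x : mad x -> sel (stage x) = Some x.
Proof. exact: xgetPex. Qed.

Lemma mad_infinite_sub x : mad x -> infinite_sub x.
Proof. by case=> a /sel_good/gc_infinite. Qed.

Lemma sel_ad_chosen a x c : sel a = Some x -> chosen a c -> finite_set (setof x `&` setof c).
Proof. by move=> /sel_good ax ac; apply: (gc_ad ax); rewrite values_below_sel //; right. Qed.

Lemma mad_ad x y : mad x -> mad y -> x <> y -> finite_set (setof x `&` setof y).
Proof.
move=> [a ax] [b bx] xy; have [ab|[ab|ba]] := lt_tri a b.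
- by rewrite setIC; apply: (sel_ad_chosen bx); exists a.
- by move: ax; rewrite ab bx => -[yx]; case: xy.
- by apply: (sel_ad_chosen ax); exists b.
Qed.

(* A set almost disjoint from all earlier members is split at its own stage. *)
Lemma mad_max y : infinite_sub y -> exists2 x, mad x & infinite_set (setof y `&` setof x).
Proof.
move=> y_inf; have [[c [[b [_ bc]] yc]]|no_c] :=
  pselect (exists c, chosen y c /\ infinite_set (setof y `&` setof c)).
  by exists c => //; exists b.
have [x yx] : exists x, sel y = Some x.
  by apply: sel_some => // c yc; apply: contrapT => yc_inf; apply: no_c; exists c.
exists x; first by exists y.
by have /sel_good yxP := yx; rewrite setIidr; [apply: gc_infinite yxP|apply: gc_sub yxP].
Qed.

Lemma lt_or_lte a b : lt a b \/ lte b a.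
Proof. by have [|[->|]] := lt_tri a b; [left|right; right|right; left]. Qed.

Lemma exists_lte_max (X : eqType) (f : X -> T) (s : seq X) : s != [::] ->
  exists2 x, x \in s & forall y, y \in s -> lte (f y) (f x).
Proof.
elim: s => // x s IH _; have [->|/IH[m ms m_max]] := eqVneq s [::].
  by exists x; rewrite ?mem_head // => y; rewrite mem_seq1 => /eqP->; right.
have [xm|mx] := lt_or_lte (f x) (f m).
  exists m; first by rewrite inE ms orbT.
  by move=> y; rewrite inE => /orP[/eqP->|/m_max]; [left|].
exists x; first exact: mem_head.
move=> y; rewrite inE => /orP[/eqP->|/m_max ym]; first by right.
by case: mx ym => [mx [ym|->]|<-]; [left; apply: lt_trans mx|left|].
Qed.

Lemma stage_lt_ad x y : mad x -> mad y -> lt (stage y) (stage x) ->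
  finite_set (setof (stage x) `&` setof y).
Proof.
move=> mx my yx; have := gc_eligible_ad (sel_good (stageP mx)).
by rewrite values_below_sel; [apply; exists (stage y); split=> //; apply: stageP|right].
Qed.

Lemma mad_infinite : infinite_set mad.
Proof.
have T_inf : infinite_sub (cantor_of setT).
  by rewrite /infinite_sub setof_cantor_of; apply: infinite_nat.
move=> /finite_fsetP[X madX]; have [x0 mx0 _] := mad_max T_inf.
have [|m mX m_max] := @exists_lte_max _ stage (finmap.enum_fset X).
  apply/eqP => X0; move: mx0; rewrite madX => x0X.
  by have : x0 \in finmap.enum_fset X := x0X; rewrite X0.
have mm : mad m by rewrite madX.
pose Z := setof (stage m) `\` setof m.
have Z_inf : infinite_sub (cantor_of Z).
  by rewrite /infinite_sub setof_cantor_of; apply: (gc_rest (sel_good (stageP mm))).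
have [b mb] := mad_max Z_inf; rewrite setof_cantor_of; apply.
have [bm|bm] := pselect (b = m).
  by rewrite bm; apply: (sub_finite_set _ (finite_set0 nat)) => t [[_]].
have bX : b \in finmap.enum_fset X by move: mb; rewrite madX => bX; exact: bX.
have [bm_lt|bm_eq] := m_max b bX; last first.
  by case: bm; move: (stageP mb); rewrite bm_eq stageP // => -[].
by apply: sub_finite_set (stage_lt_ad mm mb bm_lt) => t [[]].
Qed.

Lemma countable_bounded (B : set T) : countable B -> exists g, forall b, B b -> lt b g.
Proof.
move=> B_cnt; pose U := \bigcup_(b in B) ([set y | lt y b] `|` [set b]).
have U_cnt : countable U by apply: bigcup_countable => // b _; apply: countableU.
have [g Ug] : exists g, ~ U g.
  apply: contrapT => U_all; apply: cantor_space_uncountable.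
  by apply: countableS U_cnt => g _; apply: contrapT => Ug; apply: U_all; exists g.
exists g => b Bb; have [//|[gb|gb]] := lt_or_lte b g; case: Ug; exists b => //.
  by left.
by right.
Qed.

Lemma chosen_blocks g c : chosen g c -> forall n, exists k, c (blocks (chosen g) n k).
Proof.
move=> gc; have [_ _] := blocksP (chosen g); apply=> //; first exact: values_below_countable.
by case: gc => b [_ bc]; apply: mad_infinite_sub; exists b.
Qed.

Lemma late_avoids_blocks g x : mad x -> lte g (stage x) ->
  exists n, forall k, ~ x (blocks (chosen g) n k).
Proof.
by move=> mx gx; have := gc_block (sel_good (stageP mx)) gx; rewrite values_below_sel.
Qed.

Lemma mad_lambda : lambda_set mad.
Proof.
move=> B B_mad B_cnt; have [g Bg] := countable_bounded (countable_image stage B_cnt).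
pose H := \bigcap_n \bigcup_k [set x : T | x (blocks (chosen g) n k)].
have B_chosen b : B b -> chosen g b.
  by move=> Bb; exists (stage b); split; [apply: Bg; exists b|apply/stageP/B_mad].
have H_Gdelta : Gdelta H.
  exists (fun n => \bigcup_k [set x : T | x (blocks (chosen g) n k)]) => //.
  by move=> n; apply: bigcup_open => k _; apply: open_coord.
have E_Gdelta : Gdelta (~` (chosen g `\` B)).
  apply: Gdelta_setC_countable; first exact/hausdorff_accessible/cantor_space_hausdorff.
  exact: countableS (@subDsetl _ _ _) (values_below_countable _ _).
have [G G_open GE] := GdeltaI H_Gdelta E_Gdelta.
exists G; split=> //; rewrite -GE; apply/seteqP; split.
  move=> b Bb; split; first exact: B_mad.
  split; last by case.
  by move=> n _; have [k bk] := chosen_blocks (B_chosen b Bb) n; exists k.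
move=> x [mx [Hx xE]]; apply: contrapT => Bx; apply: xE; split=> //.
have [xg|gx] := lt_or_lte (stage x) g; first by exists (stage x); split=> //; apply: stageP.
have [n xn] := late_avoids_blocks mx gx.
by have [k _ xk] := Hx n I; case: (xn k).
Qed.

Lemma mad_concentrated : concentrated_on_fin mad.
Proof.
move=> U U_open U_fin; have [w [wU w_fin]] := coded_open_sub U_open U_fin.
apply: (@countableS _ _ (chosen w)); last exact: values_below_countable.
move=> x [mx xU]; exists (stage x); split; last exact: stageP.
have [//|wx] := lt_or_lte (stage x) w.
by case: xU; apply/wU/(gc_open (sel_good (stageP mx))).
Qed.

End Construction.

Theorem theorem4 : CH ->
  exists A : classical_sets.set cantor_space,
    MAD A /\ lambda_set A /\ concentrated_on_fin A.
Proof.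
move=> /CH_omega1_like[lt [lt_wf lt_trans lt_tri lt_cnt]].
exists (mad lt_wf); split; first split.
- exact: mad_infinite.
- exact: mad_infinite_sub.
- exact: mad_ad.
- exact: mad_max.
split; [exact: mad_lambda|exact: mad_concentrated].
Qed.
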